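(* Let $C\subseteq H$ be nonempty, closed and convex and take $B=N_C$ in Algorithm 3.1 (so $y_n=P_C(w_n-\lambda_nAw_n)$). (i) If Assumption 3.1 holds, then for every $p\in S$ and every $n$, $$\|y_n-\lambda_n(Ay_n-Aw_n)-p\|^2\le\|w_n-p\|^2-\Big(1-\frac{(\mu+\mu_n)^2\lambda_n^2}{\lambda_{n+1}^2}\Big)\|w_n-y_n\|^2 .$$ (ii) If Assumption 3.1 holds and $A$ is $r$-strongly pseudomonotone for some $r>0$, then for every $p\in S$ and every $n$, $$\|y_n-\lambda_n(Ay_n-Aw_n)-p\|^2\le\|w_n-p\|^2-\Big(1-\frac{(\mu+\mu_n)^2\lambda_n^2}{\lambda_{n+1}^2}\Big)\|w_n-y_n\|^2-2r\lambda_n\|y_n-p\|^2 .$$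
   Context: Let $H$ be a real Hilbert space, $A:H\to H$ a single-valued mapping and $B:H\to 2^H$ a set-valued mapping, and let $\Omega:=(A+B)^{-1}(0)=\{x\in H:\ 0\in Ax+Bx\}$. Algorithm 3.1 is the following iteration. Fix $x_0,x_1\in H$, $\mu\in(0,1)$, $\lambda_1>0$, real sequences $\{\alpha_n\},\{\beta_n\},\{\theta_n\}$ and nonnegative real sequences $\{\mu_n\},\{p_n\}$. For $n=1,2,\dots$ compute $w_n=x_n+\alpha_n(x_n-x_{n-1})$, $z_n=x_n+\beta_n(x_n-x_{n-1})$, $y_n=(I+\lambda_nB)^{-1}(I-\lambda_nA)w_n$, and set $\lambda_{n+1}=\min\{(\mu_n+\mu)\|w_n-y_n\|/\|Aw_n-Ay_n\|,\ \lambda_n+p_n\}$ if $Aw_n\neq Ay_n$, and $\lambda_{n+1}=\lambda_n+p_n$ otherwise. If $w_n=y_n$ the algorithm stops (then $y_n\in\Omega$). Otherwise set $x_{n+1}=(1-\theta_n)z_n+\theta_n\big(y_n-\lambda_n(Ay_n-Aw_n)\big)$ and continue. Here $I$ is the identity and $(I+\lambda B)^{-1}$ is the resolvent of $B$. Throughout, it is assumed that the algorithm does not stop, so that infinite sequences $\{x_n\},\{w_n\},\{z_n\},\{y_n\},\{\lambda_n\}$ are generated. $N_C(x)=\{z\in H:\langle z,y-x\rangle\le0\ \forall y\in C\}$ for $x\in C$ and $N_C(x)=\emptyset$ otherwise is the normal cone; $P_C$ is the metric projection onto $C$, and $(I+\lambda N_C)^{-1}=P_C$. $S$ denotes the solution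 set of the variational inequality VI$(A,C)$: find $x^*\in C$ with $\langle Ax^*,y-x^*\rangle\ge0$ for all $y\in C$. Assumption 3.1: (i) $S\neq\emptyset$; (ii) $A$ is pseudomonotone (i.e. $\langle Ax,y-x\rangle\ge0$ implies $\langle Ay,y-x\rangle\ge0$) and Lipschitz continuous on $H$, and whenever $x_n\rightharpoonup w^*$ weakly in $H$, one has $\|Aw^*\|\le\liminf_{n\to\infty}\|Ax_n\|$. $A$ is $r$-strongly pseudomonotone if $\langle Ay,x-y\rangle\ge0$ implies $\langle Ax,x-y\rangle\ge r\|x-y\|^2$ for all $x,y\in H$. *)

From mathcomp Require Import all_boot all_order all_algebra.
From mathcomp Require Import all_classical all_reals all_analysis.
Set Implicit Arguments. Unset Strict Implicit. Unset Printing Implicit Defensive.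
Import Order.TTheory GRing.Theory Num.Theory.
Import numFieldNormedType.Exports.
Local Open Scope classical_set_scope.
Local Open Scope ring_scope.

(* A real Hilbert space: a complete normed space V over R whose norm is
   induced by a (symmetric, bilinear) inner product [ip]. *)
Definition is_inner_product (R : realType) (V : completeNormedModType R)
  (ip : V -> V -> R) : Prop :=
  [/\ (forall x y, ip x y = ip y x),
      (forall a x y z, ip (a *: x + y) z = a * ip x z + ip y z)
    & (forall x, ip x x = `|x| ^+ 2)].

Definition is_metric_proj (R : realType) (V : completeNormedModType R)
  (C : set V) (u y : V) : Prop :=
  C y /\ forall c, C c -> `|u - y| <= `|u - c|.

Definition pseudomonotone (R : realType) (V : completeNormedModType R)
  (ip : V -> V -> R) (A : V -> V) : Prop :=
  forall x y, 0 <= ip (A x) (y - x) -> 0 <= ip (A y) (y - x).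

Definition strongly_pseudomonotone (R : realType) (V : completeNormedModType R)
  (ip : V -> V -> R) (r : R) (A : V -> V) : Prop :=
  forall x y, 0 <= ip (A y) (x - y) -> r * `|x - y| ^+ 2 <= ip (A x) (x - y).

Definition lipschitz_on_H (R : realType) (V : completeNormedModType R)
  (A : V -> V) : Prop :=
  exists L : R, 0 <= L /\ forall x y, `|A x - A y| <= L * `|x - y|.

Definition weakly_cvg (R : realType) (V : completeNormedModType R)
  (ip : V -> V -> R) (u : nat -> V) (w : V) : Prop :=
  forall z, (fun n => ip (u n) z) @ \oo --> ip w z.

Definition weak_norm_lsc (R : realType) (V : completeNormedModType R)
  (ip : V -> V -> R) (A : V -> V) : Prop :=
  forall (u : nat -> V) (w : V), weakly_cvg ip u w ->
    ((`|A w|)%:E <= limn_einf (fun n => (`|A (u n)|)%:E))%E.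

Definition VI_sol (R : realType) (V : completeNormedModType R)
  (ip : V -> V -> R) (A : V -> V) (C : set V) : set V :=
  fun p => C p /\ forall y, C y -> 0 <= ip (A p) (y - p).

Definition assumption31 (R : realType) (V : completeNormedModType R)
  (ip : V -> V -> R) (A : V -> V) (C : set V) : Prop :=
  [/\ VI_sol ip A C !=set0, pseudomonotone ip A, lipschitz_on_H A
    & weak_norm_lsc ip A].

(* Algorithm 3.1 with B = N_C (resolvent = P_C), run for n = 1, 2, ...
   without stopping (w_n <> y_n for all n >= 1). *)
Definition algorithm31 (R : realType) (V : completeNormedModType R)
  (A : V -> V) (C : set V) (mu lambda1 : R)
  (alpha beta theta mun pn : nat -> R)
  (x w z y : nat -> V) (lam : nat -> R) : Prop :=
  [/\ 0 < mu < 1, 0 < lambda1, (forall n, 0 <= mun n) /\ (forall n, 0 <= pn n),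
      lam 1%N = lambda1 &
      forall n, (0 < n)%N ->
      [/\ w n = x n + alpha n *: (x n - x n.-1) /\
          z n = x n + beta n *: (x n - x n.-1),
          is_metric_proj C (w n - lam n *: A (w n)) (y n),
          lam n.+1 = (if A (w n) != A (y n)
                      then Order.min ((mun n + mu) * `|w n - y n| / `|A (w n) - A (y n)|)
                                     (lam n + pn n)
                      else lam n + pn n),
          w n != y n &
          x n.+1 = (1 - theta n) *: z n
                   + theta n *: (y n - lam n *: (A (y n) - A (w n)))]].

From mathcomp Require Import all_boot all_order all_algebra.
From mathcomp Require Import all_classical all_reals all_analysis.
From mathcomp Require Import ring lra.
Import Order.TTheory GRing.Theory Num.Theory.
Import numFieldNormedType.Exports.
Local Open Scope classical_set_scope.
Local Open Scope ring_scope.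

(* The projection step y = P_C(w - l A w) satisfies the variational inequality
   <w - l A w - y, p - y> <= 0 for p in C.  Expanding
   |y - l (A y - A w) - p|^2 around w - p, this inequality absorbs the cross
   terms up to 2 l <A y, y - p>, and the step-size rule bounds
   l^2 |A y - A w|^2 by ((mu + mu_n) l / l')^2 |w - y|^2.  What remains is
   -2 l <A y, y - p>, which is <= 0 by pseudomonotonicity (p solves the VI and
   y lies in C), and <= -2 r l |y - p|^2 under strong pseudomonotonicity. *)

Section InnerProduct.
Context {R : realType} {V : completeNormedModType R} {ip : V -> V -> R}.
Hypothesis Hip : is_inner_product ip.

Lemma ipC x y : ip x y = ip y x. Proof. by case: Hip. Qed.

Lemma ipxx x : ip x x = `|x| ^+ 2. Proof. by case: Hip. Qed.

Lemma ipDl x y z : ip (x + y) z = ip x z + ip y z.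
Proof. by case: Hip => _ lin _; rewrite -[x]scale1r lin mul1r scale1r. Qed.

Lemma ipZl a x z : ip (a *: x) z = a * ip x z.
Proof.
case: Hip => _ lin _.
have ip0 : ip 0 z = 0.
  by have := lin 1 0 0 z; rewrite scaler0 addr0 mul1r; lra.
by rewrite -[a *: x]addr0 lin ip0 addr0.
Qed.

Lemma ipNl x z : ip (- x) z = - ip x z.
Proof. by rewrite -scaleN1r ipZl mulN1r. Qed.

Lemma ipDr x y z : ip z (x + y) = ip z x + ip z y.
Proof. by rewrite ipC ipDl !(ipC z). Qed.

Lemma ipZr a x z : ip z (a *: x) = a * ip z x.
Proof. by rewrite ipC ipZl ipC. Qed.

Lemma ipNr x z : ip z (- x) = - ip z x.
Proof. by rewrite ipC ipNl ipC. Qed.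

Lemma metric_proj_ip_le0 {C : set V} {u y p : V} :
  convex_set C -> is_metric_proj C u y -> C p -> ip (u - y) (p - y) <= 0.
Proof.
move=> convC [Cy ymin] Cp; rewrite leNgt; apply/negP => a_gt0.
set a := ip (u - y) (p - y) in a_gt0 *.
set b := `|p - y| ^+ 2.
have ab_gt0 : 0 < a + b by rewrite ltr_wpDr // exprn_ge0.
(* [t = a / (a + b)] lies in (0, 1] and makes the first-order gain [2 t a]
   beat the second-order loss [t^2 b]. *)
set t := a / (a + b).
have t_gt0 : 0 < t by rewrite divr_gt0.
have t_le1 : t <= 1 by rewrite ler_pdivrMr // mul1r lerDl exprn_ge0.
have tab : t * (a + b) = a by rewrite mulfVK // gt_eqF.
have Ct : C (t *: p + (1 - t) *: y).
  have := convC p y (Itv01 (ltW t_gt0) t_le1) (mem_set Cp) (mem_set Cy).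
  by rewrite inE.
have := ymin _ Ct.
have -> : u - (t *: p + (1 - t) *: y) = (u - y) - t *: (p - y).
  by rewrite scalerBl scale1r scalerBr addrCA opprD addrA.
move=> le_norm.
have le_sqr : `|u - y| ^+ 2 <= `|u - y - t *: (p - y)| ^+ 2.
  by apply: lerXn2r; rewrite ?nnegrE.
move: le_sqr tab a_gt0; rewrite /b /a.
move: (u - y) (p - y) => v q.
rewrite -!ipxx !(ipDl, ipDr, ipNl, ipNr, ipZl, ipZr) (ipC q v) => *.
nra.
Qed.

Lemma tseng_step_estimate {w y p gw gy : V} {l K c : R} :
  ip (w - l *: gw - y) (p - y) <= 0 ->
  c <= l * ip gy (y - p) ->
  l ^+ 2 * `|gy - gw| ^+ 2 <= K * `|w - y| ^+ 2 ->
  `|y - l *: (gy - gw) - p| ^+ 2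
    <= `|w - p| ^+ 2 - (1 - K) * `|w - y| ^+ 2 - 2 * c.
Proof.
have ywp : y - p = (w - p) - (w - y).
  by rewrite addrAC opprB addrCA subrr addr0 addrC.
rewrite (addrAC y) (addrAC w) -(opprB y p) ywp.
rewrite -[gy](subrK gw).
move: (w - p) (w - y) (gy - gw) => a d e; move: gw => f.
rewrite addrK -!ipxx !(ipDl, ipDr, ipNl, ipNr, ipZl, ipZr).
rewrite ?(ipC d a) ?(ipC e a) ?(ipC f a) ?(ipC e d) ?(ipC f d) ?(ipC f e) => *.
nra.
Qed.

End InnerProduct.

Section Algorithm31.
Context {R : realType} {V : completeNormedModType R} {ip : V -> V -> R}.
Context {A : V -> V} {C : set V} {mu lambda1 : R}.
Context {alpha beta theta mun pn : nat -> R} {x w z y : nat -> V}.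
Context {lam : nat -> R}.
Hypothesis alg : algorithm31 A C mu lambda1 alpha beta theta mun pn x w z y lam.

Lemma algorithm31_lam_gt0 n : (0 < n)%N -> 0 < lam n.
Proof.
case: alg => /andP[mu_gt0 _] lambda1_gt0 [mun_ge0 pn_ge0] lam1 step.
case: n => // n _; elim: n => [|n IH]; first by rewrite lam1.
have [_ _ -> wy _] := step n.+1 isT.
have := pn_ge0 n.+1; case: ifP => [Awy|_]; last by lra.
rewrite lt_min => pn1; apply/andP; split; last by lra.
rewrite divr_gt0 // ?normr_gt0 ?subr_eq0 ?Awy //.
by rewrite mulr_gt0 ?normr_gt0 ?subr_eq0 //; have := mun_ge0 n.+1; lra.
Qed.

Lemma algorithm31_stepsize_le n : (0 < n)%N ->
  lam n.+1 * `|A (y n) - A (w n)| <= (mu + mun n) * `|w n - y n|.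
Proof.
case: alg => /andP[mu_gt0 _] _ [mun_ge0 _] _ step n_gt0.
have [_ _ -> _ _] := step n n_gt0.
case: ifP => [Awy|/negbFE/eqP ->]; last first.
  by rewrite subrr normr0 mulr0 mulr_ge0 // addr_ge0 // ltW.
rewrite -ler_pdivlMr; last by rewrite normr_gt0 subr_eq0 eq_sym Awy.
by rewrite ge_min (addrC mu) (distrC (A (y n))) lexx.
Qed.

Lemma algorithm31_stepsize_sqr_le n : (0 < n)%N ->
  lam n ^+ 2 * `|A (y n) - A (w n)| ^+ 2
    <= (mu + mun n) ^+ 2 * lam n ^+ 2 / lam n.+1 ^+ 2 * `|w n - y n| ^+ 2.
Proof.
move=> n_gt0; have lam1_gt0 := algorithm31_lam_gt0 n.+1 isT.
have [/andP[mu_gt0 _] _ [mun_ge0 _] _ _] := alg.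
have m_ge0 : 0 <= mu + mun n by rewrite addr_ge0 // ltW.
have -> : (mu + mun n) ^+ 2 * lam n ^+ 2 / lam n.+1 ^+ 2 * `|w n - y n| ^+ 2
    = lam n ^+ 2 * ((mu + mun n) * `|w n - y n| / lam n.+1) ^+ 2.
  by field; exact: lt0r_neq0 lam1_gt0.
rewrite ler_pM2l ?exprn_gt0 ?algorithm31_lam_gt0 //.
apply: lerXn2r; rewrite ?nnegrE ?normr_ge0 //.
  exact: divr_ge0 (mulr_ge0 m_ge0 (normr_ge0 _)) (ltW lam1_gt0).
by rewrite ler_pdivlMr // mulrC; apply: algorithm31_stepsize_le.
Qed.

Hypotheses (Hip : is_inner_product ip) (convC : convex_set C).

Lemma algorithm31_estimate p n c : C p -> (0 < n)%N ->
  c <= lam n * ip (A (y n)) (y n - p) ->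
  `|y n - lam n *: (A (y n) - A (w n)) - p| ^+ 2
    <= `|w n - p| ^+ 2
       - (1 - (mu + mun n) ^+ 2 * lam n ^+ 2 / lam n.+1 ^+ 2) * `|w n - y n| ^+ 2
       - 2 * c.
Proof.
move=> Cp n_gt0 le_c.
have [_ _ _ _ /(_ n n_gt0) [_ proj _ _ _]] := alg.
apply: (tseng_step_estimate Hip
  (metric_proj_ip_le0 Hip convC proj Cp) le_c).
exact: algorithm31_stepsize_sqr_le.
Qed.

End Algorithm31.

Theorem proposition3p1 (R : realType) (V : completeNormedModType R)
  (ip : V -> V -> R) (A : V -> V) (C : set V)
  (mu lambda1 : R) (alpha beta theta mun pn : nat -> R)
  (x w z y : nat -> V) (lam : nat -> R) :
  is_inner_product ip ->
  C !=set0 -> closed C -> convex_set C ->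
  algorithm31 A C mu lambda1 alpha beta theta mun pn x w z y lam ->
  assumption31 ip A C ->
  (forall p n, VI_sol ip A C p -> (0 < n)%N ->
     `|y n - lam n *: (A (y n) - A (w n)) - p| ^+ 2
     <= `|w n - p| ^+ 2
        - (1 - (mu + mun n) ^+ 2 * lam n ^+ 2 / lam n.+1 ^+ 2) * `|w n - y n| ^+ 2)
  /\
  (forall r : R, 0 < r -> strongly_pseudomonotone ip r A ->
   forall p n, VI_sol ip A C p -> (0 < n)%N ->
     `|y n - lam n *: (A (y n) - A (w n)) - p| ^+ 2
     <= `|w n - p| ^+ 2
        - (1 - (mu + mun n) ^+ 2 * lam n ^+ 2 / lam n.+1 ^+ 2) * `|w n - y n| ^+ 2
        - 2 * r * lam n * `|y n - p| ^+ 2).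
Proof.
move=> Hip _ _ convC alg [_ pmA _ _].
have estimate := algorithm31_estimate alg Hip convC.
have lam_gt0 := algorithm31_lam_gt0 alg.
have Cy n : (0 < n)%N -> C (y n).
  by case: alg => _ _ _ _ /(_ n) step /step [_ []].
split=> [p n [Cp solp] n_gt0 | r r_gt0 spmA p n [Cp solp] n_gt0].
  have := estimate p n 0 Cp n_gt0; rewrite mulr0 subr0; apply.
  apply: mulr_ge0; first exact/ltW/lam_gt0.
  exact: pmA _ _ (solp _ (Cy n n_gt0)).
have := estimate p n (r * lam n * `|y n - p| ^+ 2) Cp n_gt0.
rewrite (mulrA 2) (mulrA 2); apply; rewrite -mulrA mulrCA ler_pM2l ?lam_gt0 //.
exact: spmA _ _ (solp _ (Cy n n_gt0)).
Qed.
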